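(* Let $G$ be a graph on $n$ vertices and let $SV=(v_1,\dots,v_n)$ be a permutation of $V(G)$. Then there exist sets $VC_1,\dots,VC_{n-1}$ such that each $VC_i$ is a minimum-cardinality vertex cover of $G_i$ ($1\le i<n$) and, for each $1 \leq i < n-1$, $VC_i \cap (V(G)\setminus V_{i+1}) \subseteq VC_{i+1}$.
   Context: For $1\le i\le n$, $V_i=\{v_1,\dots,v_i\}$, and $G_i$ is the graph with vertex set $V(G)$ whose edges are exactly the edges of $G$ having one end in $V_i$ and the other in $V(G)\setminus V_i$. A vertex cover of a graph is a set of vertices incident to all its edges. *)

From mathcomp Require Import all_boot.
Set Implicit Arguments. Unset Strict Implicit. Unset Printing Implicit Defensive.

Definition simple_graph (T : finType) (e : rel T) : Prop :=
  symmetric e /\ irreflexive e.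

(* V_i = {v_1,...,v_i} for the ordering sv : 'I_n -> T (0-based: sv 0 = v_1). *)
Definition prefix_set (T : finType) (n : nat) (sv : 'I_n -> T) (i : nat) : {set T} :=
  [set sv j | j : 'I_n & (j < i)%N].

(* Edge relation of G_i: edges of G with exactly one end in V_i. *)
Definition cut_graph (T : finType) (e : rel T) (V : {set T}) : rel T :=
  fun x y => e x y && ((x \in V) != (y \in V)).

Definition is_vertex_cover (T : finType) (e : rel T) (C : {set T}) : Prop :=
  forall x y, e x y -> (x \in C) || (y \in C).

Definition is_min_vertex_cover (T : finType) (e : rel T) (C : {set T}) : Prop :=
  is_vertex_cover e C /\
  forall C' : {set T}, is_vertex_cover e C' -> (#|C| <= #|C'|)%N.

From mathcomp Require Import all_boot zify.

(* Build the covers greedily: VC_(i+1) is a smallest cover of G_(i+1) among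
   those containing VC_i \ V_(i+1); the point is that this constraint costs
   nothing.  Let S \subset S', C a minimum cover of the cut of S and D any
   cover of the cut of S'.  Take D' to be C :&: D inside S, D on S' \ S and
   C :|: D outside S', and E the complementary choices (C :|: D, C, C :&: D).
   Then D' covers the cut of S' and contains C \ S', E covers the cut of S,
   and |D'| + |E| = |C| + |D|, so minimality of C gives |D'| <= |D|. *)

Section VertexCovers.
Context {T : finType}.

Definition vertex_coverb (r : rel T) (C : {set T}) : bool :=
  [forall x, forall y, r x y ==> (x \in C) || (y \in C)].

Lemma vertex_coverP (r : rel T) (C : {set T}) :
  reflect (is_vertex_cover r C) (vertex_coverb r C).
Proof.
apply: (iffP forallP) => [covC x y exy | covC x].
  by have /forallP/(_ y)/implyP := covC x; apply.
by apply/forallP => y; apply/implyP; apply: covC.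
Qed.

Definition min_cover_containing (r : rel T) (A : {set T}) : {set T} :=
  [arg min_(C < setT | vertex_coverb r C && (A \subset C)) #|C|].

Lemma min_cover_containingP (r : rel T) (A : {set T}) :
  [/\ is_vertex_cover r (min_cover_containing r A),
      A \subset min_cover_containing r A &
      forall C, is_vertex_cover r C -> A \subset C ->
        #|min_cover_containing r A| <= #|C|].
Proof.
rewrite /min_cover_containing; case: arg_minnP.
  by rewrite subsetT andbT; apply/vertex_coverP => x y _; rewrite in_setT.
move=> C /andP[/vertex_coverP covC sAC] minC; split=> // D covD sAD.
by apply: minC; rewrite sAD andbT; apply/vertex_coverP.
Qed.

Lemma card_pointwise_add (A B C D : {set T}) :
  (forall x, (x \in A) + (x \in B) = (x \in C) + (x \in D)) ->
  #|A| + #|B| = #|C| + #|D|.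
Proof.
have cardE (X : {set T}) : #|X| = \sum_x (x \in X : nat).
  by rewrite -sum1_card big_mkcond; apply: eq_bigr => x _; case: (x \in X).
by move=> ABCD; rewrite !cardE -!big_split; apply: eq_bigr => x _.
Qed.

Lemma prefix_set_subS {n : nat} (sv : 'I_n -> T) (i : nat) :
  prefix_set sv i \subset prefix_set sv i.+1.
Proof.
apply/subsetP => x /imsetP[j]; rewrite inE => lt_ji ->.
by apply/imsetP; exists j; rewrite // inE ltnS ltnW.
Qed.

Section CutCovers.
Variable e : rel T.

Lemma cut_coverP (V C : {set T}) :
  is_vertex_cover (cut_graph e V) C <->
  (forall x y, x \in V -> y \notin V -> e x y || e y x ->
     (x \in C) || (y \in C)).
Proof.
split=> [covC x y xV yV /orP[exy | eyx] | covC x y /andP[exy]].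
- by apply: covC; rewrite /cut_graph exy xV (negbTE yV).
- by rewrite orbC; apply: covC; rewrite /cut_graph eyx xV (negbTE yV).
- case: (boolP (x \in V)) (boolP (y \in V)) => xV [] yV //= _.
    by apply: covC; rewrite ?exy.
  by rewrite orbC; apply: covC; rewrite ?exy ?orbT.
Qed.

Lemma cut_cover_exchange {S S' C D : {set T}} :
  S \subset S' ->
  is_min_vertex_cover (cut_graph e S) C ->
  is_vertex_cover (cut_graph e S') D ->
  exists D', [/\ is_vertex_cover (cut_graph e S') D',
                 C :\: S' \subset D' & #|D'| <= #|D| ].
Proof.
move=> sSS' [/cut_coverP covC minC] /cut_coverP covD.
pose D' := (C :&: D :&: S) :|: (D :&: S' :\: S) :|: ((C :|: D) :\: S').
pose E := ((C :|: D) :&: S) :|: (C :&: S' :\: S) :|: (C :&: D :\: S').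
have inS' x : x \in S -> x \in S' := subsetP sSS' x.
have covD' : is_vertex_cover (cut_graph e S') D'.
  apply/cut_coverP => x y xS' yS' exy.
  have yS : y \notin S := contra (inS' y) yS'.
  move: (covD x y xS' yS' exy); rewrite !inE xS' (negbTE yS') (negbTE yS) /=.
  case: (boolP (x \in S)) => xS; [move: (covC x y xS yS exy) |];
    by case: (x \in C); case: (x \in D); case: (y \in C); case: (y \in D).
have covE : is_vertex_cover (cut_graph e S) E.
  apply/cut_coverP => x y xS yS exy.
  move: (covC x y xS yS exy); rewrite !inE xS (inS' x xS) (negbTE yS) /=.
  case: (boolP (y \in S')) => yS'; [| move: (covD x y (inS' x xS) yS' exy)];
    by case: (x \in C); case: (x \in D); case: (y \in C); case: (y \in D).
have cardD'E : #|D'| + #|E| = #|C| + #|D|.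
  apply: card_pointwise_add => x; rewrite !inE.
  case: (boolP (x \in S)) => xS; [rewrite (inS' x xS) | case: (x \in S')];
    by case: (x \in C); case: (x \in D).
exists D'; split=> //.
  by apply/subsetP => x; rewrite !inE => /andP[-> ->]; rewrite orbT.
have := minC E covE; lia.
Qed.

Lemma min_cover_containing_cut {S S' C : {set T}} :
  S \subset S' -> is_min_vertex_cover (cut_graph e S) C ->
  is_min_vertex_cover (cut_graph e S')
    (min_cover_containing (cut_graph e S') (C :\: S')).
Proof.
move=> sSS' minC.
have [covM sCM minM] := min_cover_containingP (cut_graph e S') (C :\: S').
split=> // D covD.
have [D' [covD' sCD' leD'D]] := cut_cover_exchange sSS' minC covD.
exact: leq_trans (minM D' covD' sCD') leD'D.
Qed.

Section GreedyCovers.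
Variable V : nat -> {set T}.

Fixpoint greedy_cover (i : nat) : {set T} :=
  if i is i'.+1
  then min_cover_containing (cut_graph e (V i)) (greedy_cover i' :\: V i)
  else min_cover_containing (cut_graph e (V 0)) set0.

Lemma greedy_cover_min :
  (forall i, V i \subset V i.+1) ->
  forall i, is_min_vertex_cover (cut_graph e (V i)) (greedy_cover i).
Proof.
move=> sVS; elim=> [|i IH] /=.
  have [covM _ minM] := min_cover_containingP (cut_graph e (V 0)) set0.
  by split=> // C covC; apply: minM; rewrite ?sub0set.
exact: min_cover_containing_cut (sVS i) IH.
Qed.

Lemma greedy_cover_subS (i : nat) :
  greedy_cover i :\: V i.+1 \subset greedy_cover i.+1.
Proof.
by case: (min_cover_containingP (cut_graph e (V i.+1))
                               (greedy_cover i :\: V i.+1)).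
Qed.

End GreedyCovers.

End CutCovers.

End VertexCovers.

Theorem lemma4 (T : finType) (e : rel T) (sv : 'I_#|T| -> T) :
  simple_graph e -> bijective sv ->
  exists VC : nat -> {set T},
    (forall i : nat, (1 <= i < #|T|)%N ->
       is_min_vertex_cover (cut_graph e (prefix_set sv i)) (VC i)) /\
    (forall i : nat, (1 <= i < #|T|.-1)%N ->
       VC i :&: ~: prefix_set sv i.+1 \subset VC i.+1).
Proof.
move=> _ _; exists (greedy_cover e (prefix_set sv)); split=> i _.
  by apply: greedy_cover_min => j; apply: prefix_set_subS.
by rewrite -setDE; apply: greedy_cover_subS.
Qed.
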